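(* Let $\widetilde{\mathcal A}_{\mathrm{loc}}=\widetilde{\mathcal A}\otimes_{\mathbb Z[q_1^{\pm1},q_2^{\pm1}]}\mathbb Q(q_1,q_2)$. Then $\widetilde{\mathcal A}_{\mathrm{loc}}$ is generated as a $\mathbb Q(q_1,q_2)$-algebra by the elements $\mathscr E_{(m)}$, $m\in\mathbb Z$ (the generators indexed by vectors of length one). Equivalently, the algebra homomorphism $\mathcal U\otimes\mathbb Q(q_1,q_2)\to\widetilde{\mathcal A}_{\mathrm{loc}}$, $E_m\mapsto\mathscr E_{(m)}$, is surjective.
   Context: $\widetilde{\mathcal A}$ is the $\mathbb Z[q_1^{\pm1},q_2^{\pm1}]$-algebra generated by symbols $\mathscr E_{(d_1,\dots,d_n)}$ ($n\ge1$, $d_i\in\mathbb Z$) modulo the relations: for all $d_1,\dots,d_n$ and $1\le i<n$, $\mathscr E_{(d_1,\dots,d_i,d_{i+1},\dots,d_n)}-q_1q_2\mathscr E_{(d_1,\dots,d_i-1,d_{i+1}+1,\dots,d_n)}=(1-q_1)\mathscr E_{(d_1,\dots,d_i)}\mathscr E_{(d_{i+1},\dots,d_n)}$; and for all $d_1,\dots,d_n,k$, $[\mathscr E_{(k)},\mathscr E_{(d_1,\dots,d_n)}]=(q_2-1)\sum_{i=1}^nc_i$ with $c_i=\sum_{a=1}^{k-d_i}\mathscr E_{(d_1,\dots,d_{i-1},k-a,d_i+a,d_{i+1},\dots,d_n)}$ if $k\ge d_i$ and $c_i=-\sum_{a=1}^{d_i-k}\mathscr E_{(d_1,\dots,d_{i-1},d_i-a,k+a,d_{i+1},\dots,d_n)}$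 if $k\le d_i$. $\mathcal U$ is the $\mathbb Z[q_1^{\pm1},q_2^{\pm1}]$-algebra generated by $E_m$ ($m\in\mathbb Z$), with $E(z)=\sum_mE_mz^{-m}$, modulo $E(z)E(w)(z-wq_1)(z-wq_2)(z-\tfrac{w}{q_1q_2})=E(w)E(z)(zq_1-w)(zq_2-w)(\tfrac{z}{q_1q_2}-w)$ and $[[E_{m+1},E_{m-1}],E_m]=0$; the homomorphism $E_m\mapsto\mathscr E_{(m)}$ to $\widetilde{\mathcal A}$ is well defined. *)

From HB Require Import structures.
From mathcomp Require Import all_boot all_order all_algebra.
From mathcomp Require Import fraction.
From mathcomp.multinomials Require Import monalg.

Set Implicit Arguments.
Unset Strict Implicit.
Unset Printing Implicit Defensive.

Import Order.TTheory GRing.Theory Num.Theory.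
Local Open Scope ring_scope.

(* The coefficient field Q(q1,q2), realised as the fraction field of
   Q[q1][q2] = {poly {poly rat}}. *)
Definition Lfield : fieldType := {fraction {poly {poly rat}}}.

Definition q1 : Lfield := tofrac (('X : {poly rat})%:P).
Definition q2 : Lfield := tofrac ('X : {poly {poly rat}}).

(* Generators E_(d_1,...,d_n), n >= 1, are indexed by nonempty integer
   vectors, encoded as (d_1, [:: d_2; ...; d_n]). *)
Definition genIdx : choiceType := (int * seq int)%type.

(* The free (noncommutative) Q(q1,q2)-algebra on the symbols E_d:
   the monoid algebra of the free monoid on genIdx. *)
Definition FA := {malg Lfield[{fmonom genIdx}]}.

(* The symbol E_d for a nonempty vector d (value 0 on the empty vector,
   which never occurs in the relations below). *)
Definition E (d : seq int) : FA :=
  match d with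
  | x :: s => << fmu (x, s) >>
  | [::] => 0
  end.

Definition rel1 (a : seq int) (x y : int) (b : seq int) : FA :=
  E (a ++ x :: y :: b) - (q1 * q2) *: E (a ++ (x - 1) :: (y + 1) :: b)
  - (1 - q1) *: (E (rcons a x) * E (y :: b)).

Definition cterm (k : int) (a : seq int) (x : int) (b : seq int) : FA :=
  if x <= k then
    \sum_(1 <= j < (absz (k - x)).+1) E (a ++ (k - j%:Z) :: (x + j%:Z) :: b)
  else
    - \sum_(1 <= j < (absz (x - k)).+1) E (a ++ (x - j%:Z) :: (k + j%:Z) :: b).

Definition rel2 (k : int) (d : seq int) : FA :=
  (E [:: k] * E d - E d * E [:: k])
  - (q2 - 1) *: \sum_(i < size d) cterm k (take i d) (nth 0 d i) (drop i.+1 d).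

Definition rels (r : FA) : Prop :=
  (exists a x y b, r = rel1 a x y b) \/
  (exists k d, d <> [::] /\ r = rel2 k d).

Inductive in_ideal (S : FA -> Prop) : FA -> Prop :=
  | ideal_gen r : S r -> in_ideal S r
  | ideal_0 : in_ideal S 0
  | ideal_add u v : in_ideal S u -> in_ideal S v -> in_ideal S (u + v)
  | ideal_mull c u : in_ideal S u -> in_ideal S (c * u)
  | ideal_mulr u c : in_ideal S u -> in_ideal S (u * c).

Inductive in_subalg_Em : FA -> Prop :=
  | sub_scal (c : Lfield) : in_subalg_Em (c%:MP)
  | sub_gen (m : int) : in_subalg_Em (E [:: m])
  | sub_add u v : in_subalg_Em u -> in_subalg_Em v -> in_subalg_Em (u + v)
  | sub_mul u v : in_subalg_Em u -> in_subalg_Em v -> in_subalg_Em (u * v).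

(* A~_loc = FA / (ideal generated by rels); "u = v in A~_loc": *)
Definition Aloc_eq (u v : FA) : Prop := in_ideal rels (u - v).

From HB Require Import structures.
From mathcomp Require Import all_boot all_order all_algebra.
From mathcomp Require Import fraction.
From mathcomp.multinomials Require Import monalg.
From mathcomp Require Import zify.
Set Implicit Arguments.
Unset Strict Implicit.
Unset Printing Implicit Defensive.
Import Order.TTheory GRing.Theory Num.Theory.
Local Open Scope ring_scope.

(* Induct on the length n of the index vectors, assuming every shorter symbol
   lies in the subalgebra generated by the E_(m) modulo the relations.  Then
   the product term of the first relation is harmless, so E_d is a nonzero
   multiple of the symbol obtained by moving one unit from d_i to d_(i+1):
   modulo the subalgebra, a symbol of length n only depends on the sum of its
   entries.  For n >= 2 and x < k the commutator [E_(k), E_(x,k,...,k)]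
   involves only shorter symbols, while the second relation rewrites it as
   (q2 - 1) sum_(j = 1..k-x) E_(k-j,x+j,k,...,k), i.e. as
   (q2 - 1)(1 + q1 q2 + ... + (q1 q2)^(k-x-1)) E_(x,k,...,k); choosing x
   reaches every sum of entries.  Both scalars are nonzero in Q(q1,q2). *)

Definition inEm (u : FA) : Prop := exists v, in_subalg_Em v /\ Aloc_eq u v.

Lemma inEm_ideal u : in_ideal rels u -> inEm u.
Proof.
move=> u_rel; exists 0; split; last by rewrite /Aloc_eq subr0.
by rewrite -malgC0E; apply: sub_scal.
Qed.

Lemma inEmC c : inEm c%:MP.
Proof. by exists c%:MP; split; [apply: sub_scal | rewrite /Aloc_eq subrr; apply: ideal_0]. Qed.

Lemma inEm0 : inEm 0.
Proof. exact/inEm_ideal/ideal_0. Qed.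

Lemma inEmD u w : inEm u -> inEm w -> inEm (u + w).
Proof.
move=> [v1 [sub1 eq1]] [v2 [sub2 eq2]]; exists (v1 + v2); split; first exact: sub_add.
by rewrite /Aloc_eq opprD addrACA; apply: ideal_add.
Qed.

Lemma inEmM u w : inEm u -> inEm w -> inEm (u * w).
Proof.
move=> [v1 [sub1 eq1]] [v2 [sub2 eq2]]; exists (v1 * v2); split; first exact: sub_mul.
rewrite /Aloc_eq; have -> : u * w - v1 * v2 = (u - v1) * w + v1 * (w - v2).
  by rewrite mulrBl mulrBr addrA subrK.
by apply: ideal_add; [apply: ideal_mulr | apply: ideal_mull].
Qed.

Lemma inEmZ c u : inEm u -> inEm (c *: u).
Proof. by move=> inEm_u; rewrite -mul_malgC; apply: inEmM => //; apply: inEmC. Qed.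

Lemma inEmB u w : inEm u -> inEm w -> inEm (u - w).
Proof. by move=> inEm_u inEm_w; rewrite -scaleN1r; apply/inEmD/inEmZ. Qed.

Lemma inEm_sum (I : Type) (r : seq I) (F : I -> FA) :
  (forall i, inEm (F i)) -> inEm (\sum_(i <- r) F i).
Proof.
move=> inEmF; elim: r => [|i r IHr]; first by rewrite big_nil; apply: inEm0.
by rewrite big_cons; apply: inEmD.
Qed.

Lemma inEm_gen m : inEm (E [:: m]).
Proof. by exists (E [:: m]); split; [apply: sub_gen | rewrite /Aloc_eq subrr; apply: ideal_0]. Qed.

Lemma inEmBZ_iff c u w : c != 0 -> inEm (u - c *: w) -> inEm u <-> inEm w.
Proof.
move=> c_neq0 inEm_uw; split=> [inEm_u | inEm_w].
  by rewrite -(scalerK c_neq0 w) -[c *: w](subKr u); apply/inEmZ/inEmB.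
by rewrite -(subrK (c *: w) u); apply/inEmD/inEmZ.
Qed.

Lemma malgMUU (K : monomType) (R : nzRingType) (c1 c2 : R) (k1 k2 : K) :
  << c1 *g k1 >> * << c2 *g k2 >> = << c1 * c2 *g mmul k1 k2 >> :> {malg R[K]}.
Proof. by rewrite malgM_def fgmulUU. Qed.

Lemma inEm_monom (k : {fmonom genIdx}) :
  (forall d, inEm (E d)) -> inEm << k >>.
Proof.
move=> inEmE; case: k => s; elim: s => [|[x s] t IHt].
  rewrite (_ : FMonom [::] = mone :> {fmonom genIdx}); first exact: (inEmC 1).
  by apply/val_inj; rewrite /= fm1.
rewrite (_ : FMonom _ = mmul (fmu (x, s)) (FMonom t)); last first.
  by apply/val_inj; rewrite /= fmM fmU.
by rewrite -[1]mulr1 -malgMUU; apply: inEmM; [apply: (inEmE (x :: s)) |].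
Qed.

Lemma inEm_of_E u : (forall d, inEm (E d)) -> inEm u.
Proof.
move=> inEmE; rewrite (monalgE u); apply: inEm_sum => k.
by rewrite -[u@_k]mulr1 -[k]mul1m -malgMUU mul_malgC; apply/inEmZ/inEm_monom.
Qed.

Fixpoint geom (R : nzRingType) (t : R) (m : nat) : R :=
  if m is m'.+1 then 1 + t * geom t m' else 0.

Lemma rmorph_geom (R S : nzRingType) (f : {rmorphism R -> S}) t m :
  f (geom t m) = geom (f t) m.
Proof. by elim: m => [|m IHm] /=; rewrite ?rmorph0 // rmorphD rmorph1 rmorphM IHm. Qed.

Lemma geom0S (R : nzRingType) m : geom (0 : R) m.+1 = 1.
Proof. by rewrite /= mul0r addr0. Qed.

Lemma q1q2_neq0 : q1 * q2 != 0.
Proof. by rewrite mulf_neq0 // tofrac_eq0 ?polyC_eq0 polyX_eq0. Qed.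

Lemma q2B1_neq0 : q2 - 1 != 0.
Proof. by rewrite -tofrac1 -tofracB tofrac_eq0 polyXsubC_eq0. Qed.

(* Specialising q2 to 0 turns [geom (q1 q2) m.+1] into 1. *)
Lemma geom_q1q2_neq0 m : geom (q1 * q2) m.+1 != 0.
Proof.
rewrite -tofracM -rmorph_geom tofrac_eq0; apply/eqP=> /(congr1 (horner_eval 0)).
rewrite rmorph_geom rmorph0 -[_ (_ * 'X)]/((_ * 'X).[0]) hornerMX mulr0 geom0S.
by move/eqP; rewrite oner_eq0.
Qed.

Lemma ctermxx k a b : cterm k a k b = 0.
Proof. by rewrite /cterm lexx subrr big_geq. Qed.

Section Straightening.

Variable n : nat.
Hypothesis inEm_shorter : forall d, (size d < n)%N -> inEm (E d).

Lemma inEm_rel1 a x y b : (size a + size b).+2 = n ->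
  inEm (E (a ++ x :: y :: b) - (q1 * q2) *: E (a ++ (x - 1) :: (y + 1) :: b)).
Proof.
move=> size_n; have inEm_prod : inEm ((1 - q1) *: (E (rcons a x) * E (y :: b))).
  by apply/inEmZ/inEmM; apply: inEm_shorter; rewrite /= ?size_rcons; lia.
rewrite -[_ - _](subrK ((1 - q1) *: (E (rcons a x) * E (y :: b)))).
apply: inEmD inEm_prod; apply/inEm_ideal/ideal_gen; left.
by exists a, x, y, b.
Qed.

Lemma inEm_E_shift1 a x y b : (size a + size b).+2 = n ->
  inEm (E (a ++ x :: y :: b)) <-> inEm (E (a ++ (x - 1) :: (y + 1) :: b)).
Proof. by move=> size_n; apply: inEmBZ_iff q1q2_neq0 (inEm_rel1 x y size_n). Qed.

Lemma inEm_E_shiftn a x y b (j : nat) : (size a + size b).+2 = n ->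
  inEm (E (a ++ x :: y :: b)) <-> inEm (E (a ++ (x - j%:Z) :: (y + j%:Z) :: b)).
Proof.
move=> size_n; elim: j => [|j IHj]; first by rewrite subr0 addr0.
rewrite IHj inEm_E_shift1 //.
by rewrite -addrA -opprD -addrA (addrC _ 1) -intS.
Qed.

Lemma inEm_E_shift a x y b (j : int) : (size a + size b).+2 = n ->
  inEm (E (a ++ x :: y :: b)) <-> inEm (E (a ++ (x - j) :: (y + j) :: b)).
Proof.
move=> size_n; case: j => j; first exact: inEm_E_shiftn.
rewrite NegzE opprK (inEm_E_shiftn (x + j.+1%:Z) (y - j.+1%:Z) j.+1 size_n).
by rewrite addrK subrK.
Qed.

Lemma inEm_E_merge a x y b : (size a + size b).+2 = n ->
  inEm (E (a ++ x :: y :: b)) <-> inEm (E (a ++ 0 :: (x + y) :: b)).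
Proof. by move=> size_n; rewrite (inEm_E_shift x y x size_n) subrr addrC. Qed.

Lemma inEm_E_flatten a x r : (size a + size r).+1 = n ->
  inEm (E (a ++ x :: r)) <->
  inEm (E (a ++ rcons (nseq (size r) 0) (x + \sum_(i <- r) i))).
Proof.
elim: r a x => [|y r IHr] a x size_n; first by rewrite big_nil addr0.
rewrite inEm_E_merge; last by rewrite /= in size_n; lia.
rewrite -cat_rcons IHr; last by rewrite size_rcons /= in size_n *; lia.
by rewrite cat_rcons /= big_cons addrA.
Qed.

Lemma inEm_shift_sum a u v b m : (size a + size b).+2 = n ->
  inEm (\sum_(1 <= j < m.+1) E (a ++ (u - j%:Z) :: (v + j%:Z) :: b)
        - geom (q1 * q2) m *: E (a ++ (u - m%:Z) :: (v + m%:Z) :: b)).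
Proof.
move=> size_n; elim: m => [|m IHm].
  by rewrite big_geq // scale0r subr0; apply: inEm0.
rewrite big_nat_recr; last exact: leq0n.
rewrite [geom _ m.+1]/=.
set S := \sum_(1 <= j < m.+1) _; set g := geom _ m.
set Em := E (a ++ (u - m%:Z) :: (v + m%:Z) :: b).
set Em1 := E (a ++ (u - m.+1%:Z) :: (v + m.+1%:Z) :: b).
have inEm_step : inEm (Em - (q1 * q2) *: Em1).
  have := inEm_rel1 (u - m%:Z) (v + m%:Z) size_n.
  by rewrite -!addrA -opprD (addrC _ 1) -intS; apply.
change (inEm (S + Em1 - (1 + q1 * q2 * g) *: Em1)).
have -> : S + Em1 - (1 + q1 * q2 * g) *: Em1
          = (S - g *: Em) + g *: (Em - (q1 * q2) *: Em1).
  rewrite scalerBr scalerA scalerDl scale1r [_ * g]mulrC opprD addrA addrK addrA subrK.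
  reflexivity.
by apply: inEmD IHm _; apply: inEmZ.
Qed.

Lemma inEm_commutator_sum N k x : N.+2 = n -> x <= k ->
  inEm (\sum_(1 <= j < (absz (k - x)).+1) E ((k - j%:Z) :: (x + j%:Z) :: nseq N k)).
Proof.
move=> size_n x_le_k; set d := x :: nseq N k.
have inEm_d : inEm (E d) by apply: inEm_shorter; rewrite /= size_nseq -size_n.
have inEm_comm : inEm (E [:: k] * E d - E d * E [:: k]).
  by apply: inEmB; apply: inEmM; first [exact: inEm_d | exact: inEm_gen].
have inEm_rel2 : inEm (rel2 k d) by apply/inEm_ideal/ideal_gen; right; exists k, d; split.
have cterm_sum : \sum_(i < size d) cterm k (take i d) (nth 0 d i) (drop i.+1 d)
                 = cterm k [::] x (nseq N k).
  rewrite big_ord_recl big1 ?addr0; first by rewrite /= drop0.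
  move=> i _; have i_lt_N : (i < N)%N by rewrite -[X in (_ < X)%N](size_nseq N k) ltn_ord.
  by rewrite [d`_ _]/= nth_nseq add0n i_lt_N ctermxx.
move: inEm_rel2; rewrite /rel2 cterm_sum /cterm x_le_k => inEm_rel2.
exact: (inEmBZ_iff q2B1_neq0 inEm_rel2).1 inEm_comm.
Qed.

Lemma inEm_E_normal N s : N.+2 = n -> inEm (E (rcons (nseq N.+1 0) s)).
Proof.
move=> size_n; pose k : int := (absz s)%:Z + 1; pose x := s - k *+ N.+1.
have x_lt_k : x < k.
  have kN_ge0 : 0 <= k *+ N.+1 by rewrite mulrn_wge0 // /k; lia.
  by rewrite /x; move: kN_ge0; rewrite /k; lia.
have [m abs_kx] : exists m, absz (k - x) = m.+1 by exists (absz (k - x)).-1; lia.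
have m_eq : m.+1%:Z = k - x by rewrite -abs_kx gez0_abs // subr_ge0 ltW.
have inEm_sum := inEm_commutator_sum size_n (ltW x_lt_k).
have inEm_shifts : inEm (\sum_(1 <= j < m.+2) E ((k - j%:Z) :: (x + j%:Z) :: nseq N k)
                          - geom (q1 * q2) m.+1 *: E (x :: nseq N.+1 k)).
  have := inEm_shift_sum (a := [::]) (b := nseq N k) k x m.+1.
  rewrite m_eq subKr (addrC x) subrK size_nseq => /(_ size_n) inEm_shifts'.
  exact: inEm_shifts'.
rewrite abs_kx in inEm_sum.
have inEm_E_xk : inEm (E (x :: nseq N.+1 k)).
  exact: (inEmBZ_iff (geom_q1q2_neq0 m) inEm_shifts).1 inEm_sum.
have := inEm_E_flatten (a := [::]) (r := nseq N.+1 k) x.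
rewrite size_nseq big_nseq iter_addr_0 /x subrK => /(_ size_n) <-.
exact: inEm_E_xk.
Qed.

Lemma inEm_E_size d : size d = n -> inEm (E d).
Proof.
case: d => [|x [|y r]] size_d; [exact: inEm0 | exact: inEm_gen |].
apply/(inEm_E_flatten (a := [::]) x); first by rewrite -size_d.
exact: inEm_E_normal.
Qed.

End Straightening.

Lemma inEm_E d : inEm (E d).
Proof.
suff inEm_size n : forall d, size d = n -> inEm (E d) by exact: inEm_size.
elim/ltn_ind: n => n IHn {}d size_d.
by apply: (inEm_E_size _ size_d) => d' lt_d'; apply: (IHn _ lt_d').
Qed.

Theorem proposition2p13 :
  forall u : FA, exists v : FA, in_subalg_Em v /\ Aloc_eq u v.
Proof. by move=> u; apply: inEm_of_E inEm_E. Qed.
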